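(* (Failure of logical omniscience.) There exist a Hintikka tree $H$ and sentences $\varphi_1, \varphi_2$ of $L$ that are logically equivalent but satisfy $B(\varphi_1) \neq B(\varphi_2)$, where $B$ is the belief induced by $H$.
   Context: $L$ is a first-order language without equality with finitely many predicate symbols and no function or constant symbols. For $d \in \mathbb{N}$, $\Delta^{(d)}$ is the finite set of Hintikka constituents of depth $d$ with no free variables ($\Delta^{(0)} = \{\top\}$); every sentence $\varphi$ of quantifier depth $d$ is logically equivalent to the disjunction of a set $\mathrm{dnf}(\varphi) \subseteq \Delta^{(d)}$ (its Hintikka distributive normal form of depth $d$). $\mathrm{expand}(1,\delta^{(d)})\subseteq\Delta^{(d+1)}$ denotes the expansions of $\delta^{(d)}$. Refinement tree: on $\Delta = \bigcup_d \Delta^{(d)}$ put an edge from each $\delta^{(d)}$ to each member of $\mathrm{expand}(1,\delta^{(d)})$, keeping a constituent lying in several depth-$d$ expansions as child of only one of them. A Hintikka tree is a function $H: \Delta \to [0,1]$ with $H(\delta^{(0)}) = 1$ and $H(\delta) = \sum_{\delta' \text{ child of } \delta} H(\delta')$ for all $\delta$. Let $\Psi^\omega$ be the set of infinite root paths in the refinement tree with the topology generated by cylinders $[\delta^{(0)}\cdots\delta^{(d)}]$ (paths with that prefix), and $\beta$ the unique Borel probability measure with $\beta([\delta^{(0)}\cdots\delta^{(d)}]) = H(\delta^{(d)})$. The belief in a sentence $\varphi$ of depth $d$ is $B(\varphi) = \sum_{\delta^{(d)} \in \mathrm{dnf}(\varphi)} \beta([\delta^{(0)} \cdots \delta^{(d)}])$,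 where $\delta^{(0)}\cdots\delta^{(d)}$ is the root path to $\delta^{(d)}$. *)

From HB Require Import structures.
From mathcomp Require Import all_boot all_order all_algebra.
From mathcomp Require Import boolp reals.
Set Implicit Arguments. Unset Strict Implicit. Unset Printing Implicit Defensive.
Import Order.TTheory GRing.Theory Num.Theory.

(* The language L: a finite type P of predicate symbols with arities ar.
   No equality, no function or constant symbols. *)
Section FOL.
Variables (P : finType) (ar : P -> nat).

Inductive fol : Type :=
| FTrue
| FFalse
| FAtom (p : P) (args : (ar p).-tuple nat)
| FNot (f : fol)
| FAnd (f g : fol)
| FOr (f g : fol)
| FImp (f g : fol)
| FEx (x : nat) (f : fol)
| FAll (x : nat) (f : fol).

Fixpoint qdepth (f : fol) : nat :=
  match f with
  | FNot g => qdepth g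
  | FAnd g h | FOr g h | FImp g h => maxn (qdepth g) (qdepth h)
  | FEx _ g | FAll _ g => (qdepth g).+1
  | _ => 0
  end.

Fixpoint fv (f : fol) : seq nat :=
  match f with
  | FAtom _ t => tval t
  | FNot g => fv g
  | FAnd g h | FOr g h | FImp g h => fv g ++ fv h
  | FEx x g | FAll x g => filter (predC1 x) (fv g)
  | _ => [::]
  end.

Definition sentence (f : fol) : Prop := fv f = [::].

Record structure := MkStructure {
  dom :> Type;
  dom_inhabited : inhabited dom;
  interp : forall p : P, (ar p).-tuple dom -> Prop }.

Definition upd (M : Type) (v : nat -> M) (x : nat) (a : M) : nat -> M :=
  fun y => if y == x then a else v y.

Fixpoint sat (M : structure) (v : nat -> M) (f : fol) : Prop :=
  match f with
  | FTrue => True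
  | FFalse => False
  | FAtom p t => @interp M p (map_tuple v t)
  | FNot g => ~ @sat M v g
  | FAnd g h => @sat M v g /\ @sat M v h
  | FOr g h => @sat M v g \/ @sat M v h
  | FImp g h => @sat M v g -> @sat M v h
  | FEx x g => exists a : M, @sat M (upd v x a) g
  | FAll x g => forall a : M, @sat M (upd v x a) g
  end.

Definition lequiv (f g : fol) : Prop :=
  forall (M : structure) (v : nat -> M), @sat M v f <-> @sat M v g.
Definition entails (f g : fol) : Prop :=
  forall (M : structure) (v : nat -> M), @sat M v f -> @sat M v g.
Definition satisfiable (f : fol) : Prop :=
  exists (M : structure) (v : nat -> M), @sat M v f.

(** A constituent of depth d in the free variables
    x_0,...,x_{k-1} consists of a sign assignment to the atomic formulas in
    x_0..x_{k-1} that contain the last variable x_{k-1}, together with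
    (for d > 0) the set of depth-(d-1) constituents in x_0..x_k that are
    asserted to exist (and to exhaust the possibilities) for x_k. *)
Definition atom (k : nat) : finType := {p : P & (ar p).-tuple 'I_k}.
Definition mentions_last k (a : atom k) : bool :=
  (k.-1 \in map (@nat_of_ord k) (tval (tagged a))) && (0 < k).
Definition atomK (k : nat) : finType := {a : atom k | mentions_last a}.

Fixpoint ctype (d k : nat) : finType :=
  match d with
  | 0 => {ffun atomK k -> bool}
  | d'.+1 => ({ffun atomK k -> bool} * {set ctype d' k.+1})%type
  end.

Definition atom_form k (a : atomK k) : fol :=
  FAtom (map_tuple (@nat_of_ord k) (tagged (val a))).

Definition bigAnd (s : seq fol) : fol := foldr FAnd FTrue s.
Definition bigOr (s : seq fol) : fol := foldr FOr FFalse s.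

Definition signs_form k (A : {ffun atomK k -> bool}) : fol :=
  bigAnd [seq (if A a then atom_form a else FNot (atom_form a)) | a <- enum (atomK k)].

Fixpoint cform (d k : nat) {struct d} : ctype d k -> fol :=
  match d return ctype d k -> fol with
  | 0 => fun A => signs_form A
  | d'.+1 => fun c =>
      FAnd (signs_form c.1)
        (FAnd (bigAnd [seq FEx k (cform s) | s <- enum c.2])
              (FAll k (bigOr [seq cform s | s <- enum c.2])))
  end.

(** Reduction: omit the deepest layer of quantifiers.  The expansion
    expand(1, c) of a depth-d constituent c is the set of depth-(d+1)
    constituents reducing to c; this is the refinement tree (each node has a
    unique parent). *)
Fixpoint red (d k : nat) {struct d} : ctype d.+1 k -> ctype d k :=
  match d return ctype d.+1 k -> ctype d k with
  | 0 => fun c => c.1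
  | d'.+1 => fun c => (c.1, [set red s | s in c.2])
  end.

Definition Delta (d : nat) : finType := ctype d 0.

Definition expand1 (d : nat) (c : Delta d) : {set Delta d.+1} :=
  [set c' : Delta d.+1 | red c' == c].

Local Open Scope ring_scope.
Definition hintikka_tree (R : realType) (H : forall d, Delta d -> R) : Prop :=
  [/\ forall c : Delta 0, H 0 c = 1,
      forall d (c : Delta d), 0 <= H d c <= 1
    & forall d (c : Delta d), H d c = \sum_(c' in expand1 c) H d.+1 c'].

Definition dnf (f : fol) : {set Delta (qdepth f)} :=
  [set c : Delta (qdepth f) | `[< satisfiable (cform c) /\ entails (cform c) f >] ].

(** Belief: B(f) = sum over dnf(f) of beta([root path to c]) = H(c). *)
Definition belief (R : realType) (H : forall d, Delta d -> R) (f : fol) : R :=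
  \sum_(c in dnf f) H (qdepth f) c.

End FOL.

(* A Hintikka tree is only required to be additive along the refinement tree;
   nothing forces it to vanish on inconsistent constituents.  The constituent
   of depth d+1 asserting that there is no individual at all reduces to the
   unique constituent of depth 0, so the point mass on this branch is a
   Hintikka tree.  Its belief in [True] (depth 0) is 1, while its belief in
   the equivalent sentence [forall x_0, True] (depth 1) is 0, because the
   branch leaves the consistent constituents at depth 1. *)
From HB Require Import structures.
From mathcomp Require Import all_boot all_order all_algebra.
From mathcomp Require Import boolp reals.
Set Implicit Arguments. Unset Strict Implicit. Unset Printing Implicit Defensive.
Import Order.TTheory GRing.Theory Num.Theory.
Local Open Scope ring_scope.

Lemma sum_indicator (R : pzSemiRingType) (T : finType) (A : {pred T}) (x : T) :
  \sum_(c in A) ((c == x)%:R : R) = (x \in A)%:R.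
Proof.
have [xA | xNA] := boolP (x \in A).
- by rewrite (bigD1 x xA) /= eqxx big1 ?addr0 // => c /andP[_ /negbTE ->].
- by rewrite big1 // => c; case: eqP => // ->; rewrite (negbTE xNA).
Qed.

Section Constituents.
Variables (P : finType) (ar : P -> nat).

Lemma atomK0_empty (a : atomK ar 0) : False.
Proof. by case: a => a; rewrite /mentions_last andbF. Qed.

Lemma Delta0_eq (c c' : Delta ar 0) : c = c'.
Proof. by apply/ffunP => a; case: (atomK0_empty a). Qed.

Lemma signs_form0 (A : {ffun atomK ar 0 -> bool}) : signs_form A = FTrue ar.
Proof.
have /eqP : #|atomK ar 0| = 0%N by apply: eq_card0 => a; case: (atomK0_empty a).
by rewrite cardE size_eq0 /signs_form => /eqP ->.
Qed.

Definition empty_constituent (d : nat) : Delta ar d :=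
  match d return ctype ar d 0 with
  | 0 => [ffun _ => false]
  | d'.+1 => ([ffun _ => false], set0)
  end.

Lemma red_empty_constituent (d : nat) :
  red (empty_constituent d.+1) = empty_constituent d.
Proof. by case: d => //= d; rewrite imset0. Qed.

Lemma empty_constituent0_satisfiable : satisfiable (cform (empty_constituent 0)).
Proof.
pose M := @MkStructure P ar unit (inhabits tt) (fun _ _ => True).
by exists M, (fun _ => tt); rewrite /= signs_form0.
Qed.

Lemma empty_constituentS_unsat (d : nat) :
  ~ satisfiable (cform (empty_constituent d.+1)).
Proof.
move=> [M [v /= [_ [_ no_individual]]]].
by case: (dom_inhabited M) => a; move: (no_individual a); rewrite enum_set0.
Qed.

End Constituents.

Section DiracTree.
Variables (P : finType) (ar : P -> nat) (R : realType).
Variable branch : forall d, Delta ar d.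
Hypothesis red_branch : forall d, red (branch d.+1) = branch d.

Definition dirac_tree (d : nat) (c : Delta ar d) : R := (c == branch d)%:R.

Lemma dirac_tree_hintikka : hintikka_tree dirac_tree.
Proof.
split=> [c | d c | d c]; rewrite /dirac_tree.
- by rewrite (Delta0_eq c (branch 0)) eqxx.
- by case: (c == branch d); rewrite ?lexx ?ler01.
- by rewrite sum_indicator inE red_branch eq_sym.
Qed.

Lemma belief_dirac_tree (f : fol ar) :
  belief dirac_tree f = (branch (qdepth f) \in dnf f)%:R.
Proof. exact: sum_indicator. Qed.

End DiracTree.

Theorem mainTheorem5 (P : finType) (ar : P -> nat) (har : forall p, (0 < ar p)%N)
  (R : realType) :
  exists (H : forall d, Delta ar d -> R) (phi1 phi2 : fol ar),
    [/\ hintikka_tree H, sentence phi1, sentence phi2, lequiv phi1 phi2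
      & belief H phi1 != belief H phi2].
Proof.
pose H := dirac_tree R (empty_constituent ar).
exists H, (FTrue ar), (FAll 0 (FTrue ar)); split; [|by []..|].
  exact/dirac_tree_hintikka/red_empty_constituent.
have in_dnf_True : empty_constituent ar 0 \in dnf (FTrue ar).
  by rewrite inE; apply/asboolP; split=> //; apply: empty_constituent0_satisfiable.
have notin_dnf_All : empty_constituent ar 1 \notin dnf (FAll 0 (FTrue ar)).
  by rewrite inE; apply/asboolP => -[/empty_constituentS_unsat].
rewrite !belief_dirac_tree in_dnf_True (negbTE notin_dnf_All).
exact: oner_neq0.
Qed.
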